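(* Let $R=k[x_1,\dots,x_n]$, $f_1,\dots,f_m\in R$, $I=\langle f_1,\dots,f_m\rangle$, with fixed term orders on $R$ and $R^m$. Let $G$ be a finite set of polynomials in $I$ with $\{f_1^{[\mathbf e_1]},\dots,f_m^{[\mathbf e_m]}\}\subset G$, and let $f^{[\mathbf u]}$ be a polynomial in $I$. Suppose that for every critical pair $(t_g,g^{[\mathbf v]},t_h,h^{[\mathbf w]})$ of elements of $G$ with $\mathrm{lpp}(\mathbf u)\succeq\mathrm{lpp}(t_g\mathbf v)$, the S-polynomial of this critical pair has a standard representation w.r.t. $G$. Then $f^{[\mathbf u]}$ has a standard representation w.r.t. $G$.
   Context: Let $\mathbf f=(f_1,\dots,f_m)$; a polynomial in $I$ is a pair $f^{[\mathbf u]}$ with $\mathbf u\in R^m$ and $f=\mathbf u\cdot\mathbf f$, with operations $f^{[\mathbf u]}+g^{[\mathbf v]}=(f+g)^{[\mathbf u+\mathbf v]}$, $ct(f^{[\mathbf u]})=(ctf)^{[ct\mathbf u]}$. $\mathbf e_i$ is the $i$-th unit vector. $\mathrm{lpp},\mathrm{lc}$ are leading power product and coefficient (both orders denoted $\prec$), with $\mathrm{lpp}(0)=0\prec$ all nonzero power products. Critical pair: for $g^{[\mathbf v]},h^{[\mathbf w]}$ with $g,h\ne0$, $t=\mathrm{lcm}(\mathrm{lpp}(g),\mathrm{lpp}(h))$, $t_g=t/\mathrm{lpp}(g)$, $t_h=t/\mathrm{lpp}(h)$; if $\mathrm{lpp}(t_g\mathbf v)\succeq\mathrm{lpp}(t_h\mathbf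 w)$ then $(t_g,g^{[\mathbf v]},t_h,h^{[\mathbf w]})$ is a critical pair, with S-polynomial $t_g(g^{[\mathbf v]})-c\,t_h(h^{[\mathbf w]})$, $c=\mathrm{lc}(g)/\mathrm{lc}(h)$. A polynomial $f^{[\mathbf u]}$ in $I$ has a standard representation w.r.t. a set $B$ if there are $p_1,\dots,p_s\in R$ and $g_1^{[\mathbf v_1]},\dots,g_s^{[\mathbf v_s]}\in B$ with $f=\sum_i p_ig_i$, $\mathrm{lpp}(f)\succeq\mathrm{lpp}(p_ig_i)$ and $\mathrm{lpp}(\mathbf u)\succeq\mathrm{lpp}(p_i\mathbf v_i)$ for all $i$. *)

From HB Require Import structures.
From mathcomp Require Import all_boot all_order all_algebra.
From mathcomp Require Import mpoly.
Set Implicit Arguments. Unset Strict Implicit. Unset Printing Implicit Defensive.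
Import GRing.Theory.
Local Open Scope ring_scope.

Section Signature.
Variables (k : fieldType) (n m : nat).

Local Notation R := {mpoly k[n]}.
Local Notation PP := 'X_{1..n}.
(* power products (module terms) of R^m : x^a e_i *)
Local Notation MPP := ('X_{1..n} * 'I_m)%type.
Local Notation Vec := 'rV[R]_m.

Definition term_order (le : rel PP) : Prop :=
  [/\ reflexive le, antisymmetric le, transitive le, total le
    & (forall a b c, le a b -> le (mnm_add a c) (mnm_add b c))
      /\ (forall a, le mnm0 a)].

Definition mmul (t : PP) (T : MPP) : MPP := (mnm_add t T.1, T.2).

Definition module_term_order (le : rel MPP) : Prop :=
  [/\ reflexive le, antisymmetric le, transitive le, total le
    & (forall t A B, le A B -> le (mmul t A) (mmul t B))
      /\ (forall t A, le A (mmul t A))].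

(* extended order on option T: None plays the role of lpp(0) = 0, which is
   smaller than every power product *)
Definition ext_le (T : Type) (le : rel T) (a b : option T) : bool :=
  match a, b with
  | None, _ => true
  | Some _, None => false
  | Some x, Some y => le x y
  end.

Definition lmax (T : Type) (le : rel T) (s : seq T) : option T :=
  foldr (fun x acc => if ext_le le (Some x) acc then acc else Some x) None s.

Definition lpp (le : rel PP) (f : R) : option PP := lmax le (msupp f).

Definition lc (le : rel PP) (f : R) : k :=
  match lpp le f with Some a => f@_a | None => 0 end.

Definition vsupp (u : Vec) : seq MPP :=
  [seq (a, i) | i <- enum 'I_m, a <- msupp (u 0 i)].

Definition lppv (le : rel MPP) (u : Vec) : option MPP := lmax le (vsupp u).

Definition dotv (u fs : Vec) : R := \sum_(i < m) u 0 i * fs 0 i.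

(* a "polynomial in I": pair f^[u] with f = u . fs *)
Definition in_I (fs : Vec) (p : R * Vec) : Prop := p.1 = dotv p.2 fs.

Definition evec (i : 'I_m) : Vec := delta_mx 0 i.

Definition mlcm (a b : PP) : PP := [multinom maxn (a i) (b i) | i < n].

Definition std_rep (leR : rel PP) (leM : rel MPP) (B : seq (R * Vec))
    (p : R * Vec) : Prop :=
  exists s : seq (R * (R * Vec)),
    [/\ all (fun q => q.2 \in B) s,
        p.1 = \sum_(q <- s) q.1 * q.2.1,
        all (fun q => ext_le leR (lpp leR (q.1 * q.2.1)) (lpp leR p.1)) s
      & all (fun q => ext_le leM (lppv leM (q.1 *: q.2.2)) (lppv leM p.2)) s].

Definition tg_of (a b : PP) : PP := mnm_sub (mlcm a b) a.
Definition th_of (a b : PP) : PP := mnm_sub (mlcm a b) b.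

Definition critical_pair (leR : rel PP) (leM : rel MPP)
    (tg : PP) (gv : R * Vec) (th : PP) (hw : R * Vec) : Prop :=
  exists a b, [/\ lpp leR gv.1 = Some a, lpp leR hw.1 = Some b,
    tg = tg_of a b, th = th_of a b &
    ext_le leM (lppv leM ('X_[th] *: hw.2)) (lppv leM ('X_[tg] *: gv.2))].

Definition spoly (leR : rel PP)
    (tg : PP) (gv : R * Vec) (th : PP) (hw : R * Vec) : R * Vec :=
  let c := lc leR gv.1 / lc leR hw.1 in
  ('X_[tg] * gv.1 - c *: ('X_[th] * hw.1),
   'X_[tg] *: gv.2 - (c *: 'X_[th]) *: hw.2).

End Signature.

From HB Require Import structures.
From mathcomp Require Import all_boot all_order all_algebra.
From mathcomp Require Import mpoly.
From mathcomp Require Import ring.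
From Stdlib Require Import Classical ClassicalEpsilon.
Set Implicit Arguments. Unset Strict Implicit. Unset Printing Implicit Defensive.
Import GRing.Theory.

(* Start from f = sum_i u_i f_i, whose terms have signature at most lpp(u),
   and improve the representation while keeping that signature bound. Let t
   be the largest power product occurring in the terms. If t <= lpp(f) the
   representation is standard. Otherwise the coefficient of t in f vanishes,
   so at least two terms reach t; their leading monomials are those of a
   monomial multiple of the S-polynomial of the two elements of G involved
   (oriented by signature), and its standard representation, multiplied by
   that monomial, lies strictly below t and keeps the signature bound.
   Substituting it lowers the number of terms reaching t; since term orders
   are well founded (Dickson's lemma), the process terminates. *)

Section MaxOfSeq.
Variables (T : eqType) (le : rel T).
Hypotheses (le_refl : reflexive le) (le_anti : antisymmetric le)
  (le_trans : transitive le) (le_total : total le).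

Lemma ext_le_refl : reflexive (ext_le le).
Proof. by case=> //=. Qed.

Lemma ext_le_trans : transitive (ext_le le).
Proof. by move=> [b|] [a|] [c|] //=; apply: le_trans. Qed.

Lemma ext_le_total : total (ext_le le).
Proof. by move=> [a|] [b|] //=. Qed.

Lemma lmaxP s : match lmax le s with
  | None => s = [::]
  | Some x => x \in s /\ {in s, forall y, le y x} end.
Proof.
elim: s => [|a s] //=; case: (lmax le s) => [x [xs x_max]|->] /=; last first.
  by split=> [|y]; rewrite ?mem_seq1 // => /eqP->.
case: ifP => [le_ax|/negbT le_xa].
  by split=> [|y]; rewrite in_cons ?xs ?orbT // => /predU1P [->|/x_max].
have {}le_xa : le x a by move: (le_total a x); rewrite (negbTE le_xa).
split=> [|y]; rewrite ?mem_head // in_cons => /predU1P [->|/x_max le_yx] //.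
exact: le_trans le_yx le_xa.
Qed.

Lemma lmax_le s B : ext_le le (lmax le s) B = all (fun y => ext_le le (Some y) B) s.
Proof.
have := lmaxP s; case: (lmax le s) => [x [xs x_max]|->] //.
apply/idP/allP => [le_xB y ys|]; last exact.
by case: B le_xB => //= b; apply: le_trans (x_max y ys).
Qed.

Lemma lmax_ub s y : y \in s -> ext_le le (Some y) (lmax le s).
Proof. by have := lmaxP s; case: (lmax le s) => [x [_ x_max] /x_max|->]. Qed.

Lemma lmax_eq s x : x \in s -> {in s, forall y, le y x} -> lmax le s = Some x.
Proof.
move=> xs x_max; have := lmaxP s; case: (lmax le s) => [z [zs z_max]|s0].
  by congr Some; apply: le_anti; rewrite x_max ?z_max.
by rewrite s0 in xs.
Qed.

End MaxOfSeq.

Section TermOrder.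
Variables (n : nat) (leR : rel 'X_{1..n}).
Hypothesis HR : term_order leR.

Lemma leR_refl : reflexive leR. Proof. by case: HR. Qed.
Lemma leR_anti : antisymmetric leR. Proof. by case: HR. Qed.
Lemma leR_trans : transitive leR. Proof. by case: HR. Qed.
Lemma leR_total : total leR. Proof. by case: HR. Qed.

Lemma leR_add2r c a b : leR a b -> leR (a + c)%MM (b + c)%MM.
Proof. by case: HR => _ _ _ _ [+ _]; apply. Qed.

Lemma leR_add a b c d : leR a b -> leR c d -> leR (a + c)%MM (b + d)%MM.
Proof.
move=> le_ab /(leR_add2r b); rewrite ![(_ + b)%MM]addmC.
exact/leR_trans/leR_add2r.
Qed.

Lemma lem_leR a b : (a <= b)%MM -> leR a b.
Proof.
move=> /submK <-; have [_ _ _ _ [_ le0]] := HR.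
by rewrite -{1}[a]add0m leR_add ?leR_refl.
Qed.

Definition ltR a b := (a != b) && leR a b.

Lemma ltR_leR a b : ltR a b -> leR a b. Proof. by case/andP. Qed.

Lemma ltR_neqAle a b : leR a b -> a != b -> ltR a b.
Proof. by move=> le_ab ne_ab; rewrite /ltR ne_ab. Qed.

Lemma ltR_nleR a b : ltR a b -> ~~ leR b a.
Proof.
case/andP=> ne_ab le_ab; apply: contra ne_ab => le_ba.
by rewrite (@leR_anti a b) ?le_ab.
Qed.

Lemma ltR_leR_trans a b c : ltR a b -> leR b c -> ltR a c.
Proof.
move=> lt_ab le_bc; apply: ltR_neqAle (leR_trans (ltR_leR lt_ab) le_bc) _.
by apply: contraNneq (ltR_nleR lt_ab) => ->.
Qed.

Lemma leR_ltR_trans a b c : leR a b -> ltR b c -> ltR a c.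
Proof.
move=> le_ab lt_bc; apply: ltR_neqAle (leR_trans le_ab (ltR_leR lt_bc)) _.
by apply: contraNneq (ltR_nleR lt_bc) => <-.
Qed.

Lemma ltR_add a b c d : ltR a b -> leR c d -> ltR (a + c)%MM (b + d)%MM.
Proof.
move=> /andP [ne_ab le_ab] le_cd; apply: ltR_leR_trans (leR_add (leR_refl b) le_cd).
by apply: ltR_neqAle; [apply: leR_add2r | rewrite eqm_add2r].
Qed.

End TermOrder.

Section ModuleTermOrder.
Variables (n m : nat) (leM : rel ('X_{1..n} * 'I_m)).
Hypothesis HM : module_term_order leM.

Lemma leM_refl : reflexive leM. Proof. by case: HM. Qed.
Lemma leM_anti : antisymmetric leM. Proof. by case: HM. Qed.
Lemma leM_trans : transitive leM. Proof. by case: HM. Qed.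
Lemma leM_total : total leM. Proof. by case: HM. Qed.

Lemma leM_mmul2l t A B : leM A B -> leM (mmul t A) (mmul t B).
Proof. by case: HM => _ _ _ _ [+ _]; apply. Qed.

Lemma leM_mmulr t A : leM A (mmul t A).
Proof. by case: HM => _ _ _ _ [_ +]; apply. Qed.

Lemma ext_leM_mmul2l t A B : ext_le leM A B ->
  ext_le leM (omap (mmul t) A) (omap (mmul t) B).
Proof. by case: A B => [A|] [B|] //=; apply: leM_mmul2l. Qed.

End ModuleTermOrder.

Section Dickson.

Lemma exists_min_from (g : nat -> nat) N :
  exists j, N <= j /\ forall j', N <= j' -> g j <= g j'.
Proof.
apply: NNPP => no_min.
suff descent v j : N <= j -> g j <= v -> False by apply: (descent (g N) N).
elim: v j => [|v IHv] j le_Nj le_gv; apply: no_min; exists j; split=> // j' le_Nj'.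
  by move: le_gv; rewrite leqn0 => /eqP->.
rewrite leqNgt; apply/negP => lt_g; apply: (IHv j') => //.
by rewrite -ltnS (leq_trans lt_g).
Qed.

Lemma monotone_subseq (g : nat -> nat) : exists phi : nat -> nat,
  (forall i, phi i < phi i.+1) /\ (forall i, g (phi i) <= g (phi i.+1)).
Proof.
have argmin N := constructive_indefinite_description _ (exists_min_from g N).
pose phi := fix phi i := if i is i'.+1 then sval (argmin (phi i').+1) else sval (argmin 0).
have phi_incr i : phi i < phi i.+1 by have [] := svalP (argmin (phi i).+1).
have phi_min i j : phi i < j -> g (phi i.+1) <= g j.
  by have [_] := svalP (argmin (phi i).+1); apply.
have phi0_min j : g (phi 0) <= g j by have [_] := svalP (argmin 0); apply.
exists phi; split=> // -[|i]; first exact: phi0_min.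
exact/phi_min/(ltn_trans (phi_incr i)).
Qed.

Variable n : nat.

Lemma dickson (f : nat -> 'X_{1..n}) : exists i j, i < j /\ (f i <= f j)%MM.
Proof.
suff [phi [phi_incr phi_le]] : exists phi : nat -> nat, (forall i, phi i < phi i.+1) /\
   forall i (c : 'I_n), f (phi i) c <= f (phi i.+1) c.
  by exists (phi 0), (phi 1); split=> //; apply/mnm_lepP.
suff coords k : k <= n -> exists phi : nat -> nat, (forall i, phi i < phi i.+1) /\
   forall i (c : 'I_n), c < k -> f (phi i) c <= f (phi i.+1) c.
  have [phi [phi_incr phi_le]] := coords n (leqnn n).
  by exists phi; split=> // i c; apply: phi_le.
elim: k => [|k IHk] le_kn; first by exists id.
have [phi [phi_incr phi_le]] := IHk (ltnW le_kn).
have [psi [psi_incr psi_le]] := monotone_subseq (fun i => f (phi i) (Ordinal le_kn)).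
have phi_mono : {homo phi : i j / i < j} by apply: homo_ltn => //; apply: ltn_trans.
exists (phi \o psi); split=> [i|i c]; first exact: phi_mono.
rewrite ltnS leq_eqVlt => /predU1P [c_k|lt_ck].
  have -> : c = Ordinal le_kn by apply: val_inj.
  exact: psi_le.
have mono : {homo (fun j => f (phi j) c) : i j / i <= j}.
  by apply: homo_leq => [//|y x z|j]; [apply: leq_trans | apply: phi_le].
exact/mono/ltnW.
Qed.

End Dickson.

Section TermOrderWf.
Variables (n : nat) (leR : rel 'X_{1..n}).
Hypothesis HR : term_order leR.

Lemma ltR_wf : well_founded (ltR leR).
Proof.
apply: NNPP => /not_all_ex_not [x0 not_acc0].
pose NA := {x | ~ Acc (ltR leR) x}.
have down (x : NA) : exists y : NA, ltR leR (sval y) (sval x).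
  case: x => x not_acc; apply: NNPP => no_down.
  suff : Acc (ltR leR) x by [].
  constructor=> y lt_yx; apply: NNPP => not_acc_y.
  by apply: no_down; exists (exist _ y not_acc_y).
have next x := constructive_indefinite_description _ (down x).
pose chain := fix chain i := if i is i'.+1 then sval (next (chain i')) else exist _ x0 not_acc0.
pose g i := sval (chain i).
have chain_decr : {homo g : i j / i < j >-> ltR leR j i}.
  apply: homo_ltn => [y x z lt_xy lt_yz|i]; last by rewrite /g /=; case: (next _).
  exact: ltR_leR_trans lt_yz (ltR_leR lt_xy).
have [i [j [lt_ij le_ij]]] := dickson g.
by have := ltR_nleR HR (chain_decr i j lt_ij); rewrite lem_leR.
Qed.

End TermOrderWf.

Local Open Scope ring_scope.

Section LeadingPowerProduct.
Variables (k : fieldType) (n : nat) (leR : rel 'X_{1..n}).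
Hypothesis HR : term_order leR.
Local Notation R := {mpoly k[n]}.

Lemma msuppMP (p q : R) y : y \in msupp (p * q) ->
  exists a b, [/\ a \in msupp p, b \in msupp q & y = (a + b)%MM].
Proof. by move/msuppM_le/allpairsP => [[a b] /= [pa qb ->]]; exists a, b. Qed.

Lemma msuppXM (c : 'X_{1..n}) (p : R) y :
  (y \in msupp ('X_[c] * p)) = (y \in [seq (c + b)%MM | b <- msupp p]).
Proof. by rewrite mulrC; apply: perm_mem; apply: msuppMX. Qed.

Lemma mcoeffXM (c : 'X_{1..n}) (p : R) b : ('X_[c] * p)@_(c + b) = p@_b.
Proof. by rewrite mulrC mcoeffMX. Qed.

Lemma mcoeffM_uniq (p q : R) a b :
  a \in msupp p -> b \in msupp q ->
  (forall a' b', a' \in msupp p -> b' \in msupp q ->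
     (a' + b' = a + b)%MM -> a' = a /\ b' = b) ->
  (p * q)@_(a + b) = p@_a * q@_b.
Proof.
move=> pa qb uniq_ab; rewrite mpolyME raddf_sum /= big_allpairs.
rewrite (bigD1_seq a) ?msupp_uniq //= [X in _ + X]big1_seq ?addr0; last first.
  move=> a' /andP [ne_a' pa']; apply: big1_seq => b' /andP [_ qb'].
  rewrite mcoeffZ mcoeffX; case: eqP => [/(uniq_ab _ _ pa' qb') [e_a' _]|_].
    by rewrite e_a' eqxx in ne_a'.
  by rewrite mulr0.
rewrite (bigD1_seq b) ?msupp_uniq //= [X in _ + X]big1_seq ?addr0; last first.
  move=> b' /andP [ne_b' qb']; rewrite mcoeffZ mcoeffX.
  case: eqP => [/(uniq_ab _ _ pa qb') [_ e_b']|_]; last by rewrite mulr0.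
  by rewrite e_b' eqxx in ne_b'.
by rewrite mcoeffZ mcoeffX eqxx mulr1.
Qed.

Lemma lppP (p : R) : match lpp leR p with
  | None => p = 0
  | Some a => a \in msupp p /\ {in msupp p, forall y, leR y a} end.
Proof.
have := lmaxP (leR_refl HR) (leR_trans HR) (leR_total HR) (msupp p).
by rewrite /lpp; case: lmax => // /msuppnil0.
Qed.

Lemma lpp_mem (p : R) a : lpp leR p = Some a -> a \in msupp p.
Proof. by move=> lpp_p; have := lppP p; rewrite lpp_p => -[]. Qed.

Lemma lpp_max (p : R) a : lpp leR p = Some a -> {in msupp p, forall y, leR y a}.
Proof. by move=> lpp_p; have := lppP p; rewrite lpp_p => -[]. Qed.

Lemma lpp_le (p : R) B :
  ext_le leR (lpp leR p) B = all (fun y => ext_le leR (Some y) B) (msupp p).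
Proof. exact: lmax_le (leR_refl HR) (leR_trans HR) (leR_total HR) _ _. Qed.

Lemma lpp_ub (p : R) y : y \in msupp p -> ext_le leR (Some y) (lpp leR p).
Proof. exact: lmax_ub (leR_refl HR) (leR_trans HR) (leR_total HR) _ _. Qed.

Lemma lpp_eq (p : R) a : a \in msupp p -> {in msupp p, forall y, leR y a} ->
  lpp leR p = Some a.
Proof. exact: lmax_eq (leR_refl HR) (leR_anti HR) (leR_trans HR) (leR_total HR) _ _. Qed.

Lemma lpp0 : lpp leR (0 : R) = None.
Proof. by rewrite /lpp msupp0. Qed.

Lemma lpp_mul (p q : R) a b : lpp leR p = Some a -> lpp leR q = Some b ->
  lpp leR (p * q) = Some (a + b)%MM.
Proof.
move=> lpp_p lpp_q; have := lppP p; have := lppP q.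
rewrite lpp_p lpp_q => -[qb b_max] [pa a_max].
apply: lpp_eq => [|_ /msuppMP [a' [b' [pa' qb' ->]]]]; last first.
  exact: leR_add (a_max a' pa') (b_max b' qb').
rewrite mcoeff_msupp mcoeffM_uniq ?mulf_neq0 -?mcoeff_msupp // => a' b' pa' qb' e.
have [e_a | ne_a'] := eqVneq a' a; first by subst a'; split=> //; apply: (addmI e).
have := ltR_add HR (ltR_neqAle (a_max a' pa') ne_a') (b_max b' qb').
by rewrite e /ltR eqxx.
Qed.

Lemma lppX c : lpp leR ('X_[c] : R) = Some c.
Proof. by rewrite /lpp msuppX. Qed.

Lemma lpp_mulP (p q : R) t : lpp leR (p * q) = Some t ->
  exists a b, [/\ lpp leR p = Some a, lpp leR q = Some b & t = (a + b)%MM].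
Proof.
have := lppP p; have := lppP q.
case: (lpp leR p) (lpp_mul (p := p) (q := q)) => [a|] mulpq; last first.
  by move=> _ ->; rewrite mul0r lpp0.
case: (lpp leR q) mulpq => [b|] mulpq; last by move=> -> _; rewrite mulr0 lpp0.
by move=> _ _; rewrite (mulpq a b) // => -[<-]; exists a, b.
Qed.

Lemma msuppM_leR (p q : R) a b y :
  {in msupp p, forall x, leR x a} -> {in msupp q, forall x, leR x b} ->
  y \in msupp (p * q) -> leR y (a + b)%MM.
Proof. by move=> le_a le_b /msuppMP [a' [b' [pa' qb' ->]]]; apply: leR_add; auto. Qed.

Lemma msuppM_ltR (p q : R) a b y :
  {in msupp p, forall x, ltR leR x a} -> {in msupp q, forall x, leR x b} ->
  y \in msupp (p * q) -> ltR leR y (a + b)%MM.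
Proof. by move=> lt_a le_b /msuppMP [a' [b' [pa' qb' ->]]]; apply: ltR_add; auto. Qed.

Lemma msupp_sub_term (p : R) a y :
  y \in msupp (p - p@_a *: 'X_[a]) -> (y \in msupp p) && (y != a).
Proof.
move=> y_supp; have /msuppB_le := y_supp; rewrite mem_cat.
have ne_ya : y != a.
  apply: contraTneq y_supp => ->.
  by rewrite mcoeff_msupp mcoeffB mcoeffZ mcoeffX eqxx mulr1 subrr eqxx.
by rewrite ne_ya andbT => /orP [//|/msuppZ_le]; rewrite msuppX mem_seq1 (negbTE ne_ya).
Qed.

Lemma msupp_add_term (p : R) a (d : k) y : a \in msupp p ->
  y \in msupp (p + d *: 'X_[a]) -> y \in msupp p.
Proof.
move=> pa /msuppD_le; rewrite mem_cat => /orP [//|/msuppZ_le].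
by rewrite msuppX mem_seq1 => /eqP ->.
Qed.

End LeadingPowerProduct.

Section LeadingModuleTerm.
Variables (k : fieldType) (n m : nat) (leM : rel ('X_{1..n} * 'I_m)).
Hypothesis HM : module_term_order leM.
Local Notation R := {mpoly k[n]}.
Local Notation Vec := 'rV[R]_m.

Lemma mem_vsupp (u : Vec) b i : ((b, i) \in vsupp u) = (b \in msupp (u 0 i)).
Proof.
apply/allpairsPdep/idP => [[i' [b' [_ ub' [-> ->]]]] //|ub].
by exists i, b; rewrite mem_enum.
Qed.

Lemma lppvP (u : Vec) : match lppv leM u with
  | None => u = 0
  | Some (b, i) => b \in msupp (u 0 i) /\
      forall j c, c \in msupp (u 0 j) -> leM (c, j) (b, i) end.
Proof.
have := lmaxP (leM_refl HM) (leM_trans HM) (leM_total HM) (vsupp u).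
rewrite /lppv; case: lmax => [[b i] [+ b_max]|u0].
  by rewrite mem_vsupp => ub; split=> // j c uc; apply: b_max; rewrite mem_vsupp.
apply/rowP => i; rewrite mxE; apply: msuppnil0.
case E: (msupp (u 0 i)) => [//|b s].
by have := mem_vsupp u b i; rewrite E mem_head u0.
Qed.

Lemma lppv_le (u : Vec) B :
  (forall i b, b \in msupp (u 0 i) -> ext_le leM (Some (b, i)) B) ->
  ext_le leM (lppv leM u) B.
Proof.
move=> le_B; rewrite /lppv (lmax_le (leM_refl HM) (leM_trans HM) (leM_total HM)).
by apply/allP => -[b i]; rewrite mem_vsupp; apply: le_B.
Qed.

Lemma lppv_ub (u : Vec) b i :
  b \in msupp (u 0 i) -> ext_le leM (Some (b, i)) (lppv leM u).
Proof. by rewrite -mem_vsupp; apply: (lmax_ub (leM_refl HM) (leM_trans HM) (leM_total HM)). Qed.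

Lemma lppv_eq (u : Vec) b i : b \in msupp (u 0 i) ->
  (forall j c, c \in msupp (u 0 j) -> leM (c, j) (b, i)) -> lppv leM u = Some (b, i).
Proof.
move=> ub b_max; apply: (lmax_eq (leM_refl HM) (leM_anti HM) (leM_trans HM) (leM_total HM)).
  by rewrite mem_vsupp.
by move=> [c j]; rewrite mem_vsupp; apply: b_max.
Qed.

Lemma lppv0 : lppv leM (0 : Vec) = None.
Proof. by have := lppvP 0; case: lppv => // -[b i] []; rewrite mxE msupp0. Qed.

Lemma lppvXZ c (w : Vec) : lppv leM ('X_[c] *: w) = omap (mmul c) (lppv leM w).
Proof.
have := lppvP w; case: (lppv leM w) => [[b i] [wb b_max]|->] /=; last first.
  by rewrite scaler0 lppv0.
apply: lppv_eq => [|j y]; rewrite mxE msuppXM; first exact: map_f.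
by case/mapP=> y' wy' ->; apply: (leM_mmul2l HM c (b_max j y' wy')).
Qed.

Lemma lppvB_le (v w : Vec) B : ext_le leM (lppv leM v) B -> ext_le leM (lppv leM w) B ->
  ext_le leM (lppv leM (v - w)) B.
Proof.
move=> le_v le_w; apply: lppv_le => i b; rewrite !mxE => /msuppB_le.
by rewrite mem_cat => /orP [] /lppv_ub le_b; apply: (ext_le_trans (leM_trans HM) le_b).
Qed.

(* leM need not be compatible with leR, so the leading term of p *: w comes
   from the monomial a of p maximizing mmul a (lppv w), not from lpp p. *)
Lemma lppvZ_lb (p : R) (w : Vec) a : a \in msupp p ->
  ext_le leM (lppv leM ('X_[a] *: w)) (lppv leM (p *: w)).
Proof.
move=> pa; rewrite lppvXZ.
have := lppvP w; case: (lppv leM w) => [[c i] [wc c_max]|_] //=.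
have := lmaxP (leM_refl HM) (leM_trans HM) (leM_total HM) [seq mmul a' (c, i) | a' <- msupp p].
case: lmax => [M [/mapP [a0 pa0 ->] M_max]|/eqP]; last first.
  by rewrite -size_eq0 size_map; case: msupp pa.
have top : (a0 + c)%MM \in msupp ((p *: w) 0 i).
  rewrite mxE mcoeff_msupp (mcoeffM_uniq pa0 wc) ?mulf_neq0 -?mcoeff_msupp //.
  move=> a' c' pa' wc' e.
  have le_a0 : leM (mmul a' (c, i)) (mmul a0 (c, i)) by apply: M_max; apply: map_f.
  have le_c' : leM (mmul a' (c', i)) (mmul a' (c, i)) := leM_mmul2l HM _ (c_max _ _ wc').
  have e_a' : mmul a' (c, i) = mmul a0 (c, i).
    apply: (leM_anti HM); rewrite le_a0 /=.
    by have -> : mmul a0 (c, i) = mmul a' (c', i) by rewrite /mmul /= e.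
  move: (congr1 fst e_a') => /= /addIm e_a0.
  by subst a'; split=> //; apply: (addmI e).
apply: (@ext_le_trans _ _ (leM_trans HM) (Some (mmul a0 (c, i))) (Some (mmul a (c, i)))).
  by apply: M_max; apply: map_f.
exact: lppv_ub top.
Qed.

Lemma lppvZ_le (p : R) (w : Vec) B :
  ext_le leM (lppv leM (p *: w)) B =
  all (fun a => ext_le leM (lppv leM ('X_[a] *: w)) B) (msupp p).
Proof.
apply/idP/allP => [le_B a pa|le_B].
  exact: (ext_le_trans (leM_trans HM) (lppvZ_lb w pa) le_B).
apply: lppv_le => i y; rewrite mxE => /msuppMP [a [b [pa wb ->]]].
apply: (ext_le_trans (leM_trans HM) _ (le_B a pa)).
by apply: lppv_ub; rewrite mxE msuppXM; apply: map_f.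
Qed.

Lemma lppv_coord_le (u : Vec) i :
  ext_le leM (lppv leM (u 0 i *: evec k n i)) (lppv leM u).
Proof.
apply: lppv_le => j b; rewrite !mxE eqxx /=.
by case: eqP => [<-|_]; [rewrite mulr1; apply: lppv_ub | rewrite mulr0 msupp0].
Qed.

End LeadingModuleTerm.

Section SPolynomial.
Variables (k : fieldType) (n m : nat) (leR : rel 'X_{1..n}) (leM : rel ('X_{1..n} * 'I_m)).
Hypotheses (HR : term_order leR) (HM : module_term_order leM).
Local Notation R := {mpoly k[n]}.
Local Notation Vec := 'rV[R]_m.
Implicit Types (a b : 'X_{1..n}) (g h : R * Vec).

Lemma tg_ofK a b : (tg_of a b + a)%MM = mlcm a b.
Proof. exact/submK/lem_mlcml. Qed.

Lemma th_ofK a b : (th_of a b + b)%MM = mlcm a b.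
Proof. exact/submK/lem_mlcmr. Qed.

Lemma th_ofC a b : th_of a b = tg_of b a.
Proof. by congr mnm_sub; apply: mlcmC. Qed.

Lemma lc_neq0 (p : R) a : lpp leR p = Some a -> lc leR p != 0.
Proof. by rewrite /lc => lpp_p; have := lppP HR p; rewrite lpp_p -mcoeff_msupp => -[]. Qed.

Lemma spoly_lt g h a b y :
  lpp leR g.1 = Some a -> lpp leR h.1 = Some b ->
  y \in msupp (spoly leR (tg_of a b) g (th_of a b) h).1 -> ltR leR y (mlcm a b).
Proof.
move=> lpp_g lpp_h; rewrite /spoly /= => S_y.
have lpp_gX : lpp leR ('X_[tg_of a b] * g.1) = Some (mlcm a b).
  by rewrite (lpp_mul HR (lppX _ _ _) lpp_g) tg_ofK.
have lpp_hX : lpp leR ('X_[th_of a b] * h.1) = Some (mlcm a b).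
  by rewrite (lpp_mul HR (lppX _ _ _) lpp_h) th_ofK.
apply: ltR_neqAle.
  have /msuppB_le := S_y; rewrite mem_cat => /orP [|/msuppZ_le].
    by move/(lpp_ub HR); rewrite lpp_gX.
  by move/(lpp_ub HR); rewrite lpp_hX.
apply: contraTneq S_y => ->; rewrite mcoeff_msupp mcoeffB mcoeffZ negbK.
rewrite -[in X in _ - _ * X]th_ofK mcoeffXM -tg_ofK mcoeffXM.
have := lc_neq0 lpp_h; rewrite /lc lpp_g lpp_h => lc_h.
by rewrite mulfVK ?subrr.
Qed.

Lemma spoly_sig_le g h tg th :
  ext_le leM (lppv leM ('X_[th] *: h.2)) (lppv leM ('X_[tg] *: g.2)) ->
  ext_le leM (lppv leM (spoly leR tg g th h).2) (lppv leM ('X_[tg] *: g.2)).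
Proof.
move=> crit; apply: lppvB_le => //; first exact: ext_le_refl (leM_refl HM) _.
by rewrite lppvZ_le //; apply/allP => a /msuppZ_le; rewrite msuppX mem_seq1 => /eqP->.
Qed.

End SPolynomial.

Section Reduction.
Variables (k : fieldType) (n m : nat) (leR : rel 'X_{1..n}) (leM : rel ('X_{1..n} * 'I_m)).
Hypotheses (HR : term_order leR) (HM : module_term_order leM).
Local Notation R := {mpoly k[n]}.
Local Notation Vec := 'rV[R]_m.
Local Notation Q := (R * (R * Vec))%type.

Variables (G : seq (R * Vec)) (B : option ('X_{1..n} * 'I_m)).
Hypothesis spoly_std : forall g h tg th, g \in G -> h \in G ->
  critical_pair leR leM tg g th h -> ext_le leM (lppv leM ('X_[tg] *: g.2)) B ->
  std_rep leR leM G (spoly leR tg g th h).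

(* A term (p, g) stands for the multiple p * g of an element g of G; its
   signature lppv (p *: g.2) is required to stay below B. *)
Definition qval (q : Q) : R := q.1 * q.2.1.
Definition sig_ok (q : Q) := ext_le leM (lppv leM (q.1 *: q.2.2)) B.
Definition in_G (q : Q) := q.2 \in G.
Definition strictly_below t (q : Q) := all (fun y => ltR leR y t) (msupp (qval q)).

Lemma sig_ok_subset (p p' : R) g : {subset msupp p' <= msupp p} ->
  sig_ok (p, g) -> sig_ok (p', g).
Proof. by rewrite /sig_ok /= !lppvZ_le // => sub_p /allP le_B; apply/allP => a /sub_p /le_B. Qed.

Lemma spoly_expand g h a b mm (e : k) :
  g \in G -> h \in G -> lpp leR g.1 = Some a -> lpp leR h.1 = Some b ->
  ext_le leM (lppv leM ('X_[th_of a b] *: h.2)) (lppv leM ('X_[tg_of a b] *: g.2)) ->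
  ext_le leM (lppv leM ('X_[mm + tg_of a b] *: g.2)) B ->
  exists sE : seq Q, [/\ all in_G sE, all sig_ok sE,
    all (strictly_below (mm + mlcm a b)%MM) sE &
    \sum_(q <- sE) qval q = e *: ('X_[mm] * (spoly leR (tg_of a b) g (th_of a b) h).1)].
Proof.
move=> Gg Gh lpp_g lpp_h crit sig_g.
set tg := tg_of a b in crit sig_g *; set S := spoly _ _ _ _ _.
have shift A : ext_le leM A (lppv leM ('X_[tg] *: g.2)) ->
    ext_le leM (omap (mmul mm) A) B.
  move=> le_A; apply: (ext_le_trans (leM_trans HM) _ sig_g).
  by rewrite mpolyXD -scalerA lppvXZ //; apply: ext_leM_mmul2l.
have [sS [GsS sumS lppS sigS]] : std_rep leR leM G S.
  apply: spoly_std => //; first by exists a, b.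
  apply: (ext_le_trans (leM_trans HM) _ (shift _ (ext_le_refl (leM_refl HM) _))).
  by case: (lppv leM ('X_[tg] *: g.2)) => //= A; apply: leM_mmulr.
exists [seq (e *: ('X_[mm] * q.1), q.2) | q <- sS]; split.
- by rewrite all_map.
- rewrite all_map; apply/allP => -[p [g' v]] /= sSq; rewrite /sig_ok /= lppvZ_le //.
  apply/allP => x /msuppZ_le; rewrite msuppXM => /mapP [a' pa' ->].
  rewrite mpolyXD -scalerA lppvXZ //; apply/shift.
  apply: (ext_le_trans (leM_trans HM) (lppvZ_lb HM _ pa')).
  apply: (ext_le_trans (leM_trans HM) ((allP sigS) _ sSq)).
  exact: spoly_sig_le.
- rewrite all_map; apply/allP => -[p [g' v]] /= sSq; apply/allP => y.
  rewrite /qval /= -scalerAl -mulrA => /msuppZ_le; rewrite msuppXM => /mapP [y' Sy' ->].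
  have /(ext_le_trans (leR_trans HR) (lpp_ub HR Sy')) := (allP lppS) _ sSq.
  have := lppP HR S.1; case: (lpp leR S.1) => [z [Sz _]|] //= le_y'z.
  rewrite addmC [(mm + _)%MM]addmC; apply: (ltR_add HR _ (leR_refl HR mm)).
  exact (leR_ltR_trans HR le_y'z (spoly_lt HR lpp_g lpp_h Sz)).
- rewrite big_map sumS mulr_sumr scaler_sumr; apply: eq_bigr => q _.
  by rewrite /qval -scalerAl mulrA.
Qed.

Lemma spoly_cancel g h a b a1 a2 (e : k) :
  g \in G -> h \in G -> lpp leR g.1 = Some a -> lpp leR h.1 = Some b ->
  (a1 + a = a2 + b)%MM ->
  ext_le leM (lppv leM ('X_[a1] *: g.2)) B -> ext_le leM (lppv leM ('X_[a2] *: h.2)) B ->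
  exists (d : k) (sE : seq Q), [/\ all in_G sE, all sig_ok sE,
    all (strictly_below (a1 + a)%MM) sE &
    e *: ('X_[a1] * g.1) = d *: ('X_[a2] * h.1) + \sum_(q <- sE) qval q].
Proof.
move=> Gg Gh lpp_g lpp_h e_t sig_g sig_h.
have L_t : (mlcm a b <= a1 + a)%MM by rewrite lem_mlcm lem_addl e_t lem_addl.
set mm := (a1 + a - mlcm a b)%MM; have mmK : (mm + mlcm a b)%MM = (a1 + a)%MM := submK L_t.
have a1E : a1 = (mm + tg_of a b)%MM by apply: (@addIm _ a); rewrite -addmA tg_ofK mmK.
have a2E : a2 = (mm + th_of a b)%MM by apply: (@addIm _ b); rewrite -addmA th_ofK mmK e_t.
rewrite -mmK; rewrite a1E a2E in sig_g sig_h *; rewrite !mpolyXD -!mulrA.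
have := ext_le_total (leM_total HM) (lppv leM ('X_[th_of a b] *: h.2))
  (lppv leM ('X_[tg_of a b] *: g.2)).
case/orP=> [orient|].
  have [sE [GsE sigsE ltsE sumsE]] := spoly_expand e Gg Gh lpp_g lpp_h orient sig_g.
  exists (e * (lc leR g.1 / lc leR h.1)), sE; split=> //.
  by rewrite sumsE /spoly /= -!mul_mpolyC rmorphM /=; ring.
rewrite (th_ofC a b) -(th_ofC b a) [mlcm a b]mlcmC => orient.
have lc_h := lc_neq0 HR lpp_h.
have lc_g := lc_neq0 HR lpp_g.
have c_neq0 : lc leR h.1 / lc leR g.1 != 0 by apply: mulf_neq0; rewrite // invr_eq0.
rewrite th_ofC in sig_h.
have [sE [GsE sigsE ltsE sumsE]] :=
  spoly_expand (- (e / (lc leR h.1 / lc leR g.1))) Gh Gg lpp_h lpp_g orient sig_h.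
exists (e / (lc leR h.1 / lc leR g.1)), sE; split=> //.
rewrite sumsE /spoly /= mulrBr -scalerAr scaleNr scalerBr scalerA divfK //.
by rewrite opprB addrC subrK.
Qed.

Definition below t (q : Q) := all (fun y => leR y t) (msupp (qval q)).
Definition top t (q : Q) := t \in msupp (qval q).

Lemma strictly_belowW t q : strictly_below t q -> below t q && ~~ top t q.
Proof.
move=> /allP lt_t; apply/andP; split; first by apply/allP => y /lt_t /ltR_leR.
by apply/negP => /lt_t; rewrite /ltR eqxx.
Qed.

(* The leading monomials of the two terms cancel through the S-polynomial of
   their elements of G, which has a standard representation. *)
Lemma cancel_top_pair t x y :
  in_G x -> in_G y -> sig_ok x -> sig_ok y -> below t x -> below t y ->
  top t x -> top t y ->
  exists s, [/\ all in_G s, all sig_ok s, all (below t) s, (count (top t) s <= 1)%N &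
    qval x + qval y = \sum_(q <- s) qval q].
Proof.
case: x y => [p1 g1] [p2 g2]; rewrite /in_G /= => Gg1 Gg2 sig1 sig2 below1 below2 top1 top2.
have lpp_top p g : below t (p, g) -> top t (p, g) -> lpp leR (p * g.1) = Some t.
  by move=> /allP le_t top_t; apply: lpp_eq.
have [a1 [b1 [lpp_p1 lpp_g1 t1]]] := lpp_mulP HR (lpp_top _ _ below1 top1).
have [a2 [b2 [lpp_p2 lpp_g2 t2]]] := lpp_mulP HR (lpp_top _ _ below2 top2).
have sigX p g a : sig_ok (p, g) -> a \in msupp p -> ext_le leM (lppv leM ('X_[a] *: g.2)) B.
  by rewrite /sig_ok lppvZ_le // => /allP; apply.
have [d [sE [GsE sigsE ltsE sumsE]]] := spoly_cancel (p1@_a1) Gg1 Gg2 lpp_g1 lpp_g2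
  (etrans (esym t1) t2) (sigX _ _ _ sig1 (lpp_mem HR lpp_p1)) (sigX _ _ _ sig2 (lpp_mem HR lpp_p2)).
rewrite -t1 in ltsE.
have lt_x' : strictly_below t (p1 - p1@_a1 *: 'X_[a1], g1).
  apply/allP => z; rewrite /qval /= t1; apply: (msuppM_ltR HR _ (lpp_max HR lpp_g1)).
  by move=> x /msupp_sub_term /andP [/(lpp_max HR lpp_p1) le_x ne_x]; apply: ltR_neqAle.
exists [:: (p1 - p1@_a1 *: 'X_[a1], g1), (p2 + d *: 'X_[a2], g2) & sE]; split.
- by rewrite /= GsE /in_G Gg1 Gg2.
- rewrite /= sigsE andbT; apply/andP; split.
    by apply: sig_ok_subset sig1 => x /msupp_sub_term /andP [].
  by apply: sig_ok_subset sig2 => x; apply: msupp_add_term (lpp_mem HR lpp_p2).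
- rewrite /= (andP (strictly_belowW lt_x')).1 /=; apply/andP; split.
    apply/allP => z; rewrite /qval /= t2; apply: (msuppM_leR HR _ (lpp_max HR lpp_g2)).
    by move=> x /(msupp_add_term (lpp_mem HR lpp_p2)) /(lpp_max HR lpp_p2).
  by apply/allP => q /(allP ltsE) /strictly_belowW /andP [].
- rewrite /= (negbTE (andP (strictly_belowW lt_x')).2) add0n.
  suff -> : count (top t) sE = 0 by rewrite addn0 leq_b1.
  apply/eqP; rewrite -leqn0 leqNgt -has_count.
  by apply/hasPn => q /(allP ltsE) /strictly_belowW /andP [].
- rewrite !big_cons /qval /=; set sumE := \sum_(q <- sE) _.
  rewrite (addrC _ sumE) -(addKr (d *: ('X_[a2] * g2.1)) sumE).
  by rewrite -sumsE -!mul_mpolyC; ring.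
Qed.

Variable f : R.

Definition rep (s : seq Q) := [/\ all in_G s, f = \sum_(q <- s) qval q & all sig_ok s].
Definition std_term (q : Q) := ext_le leR (lpp leR (qval q)) (lpp leR f).

Lemma reduce_top t s : rep s -> all (below t) s -> ~~ ext_le leR (Some t) (lpp leR f) ->
  has (top t) s ->
  exists s', [/\ rep s', all (below t) s' & (count (top t) s' < count (top t) s)%N].
Proof.
move=> [Gs sum_s sig_s] below_s lt_tf /hasP [x sx top_x].
have f_t : f@_t = 0.
  by apply/eqP; rewrite -[_ == 0]negbK -mcoeff_msupp; apply: contra lt_tf; apply: lpp_ub.
have [y xy top_y] : exists2 y, y \in rem x s & top t y.
  apply/hasP; apply/negPn/negP => /hasPn no_top; move: top_x; rewrite /top mcoeff_msupp.
  move: f_t; rewrite sum_s (perm_big _ (perm_to_rem sx)) big_cons raddfD raddf_sum /=.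
  rewrite big1_seq ?addr0 => [->|q /andP [_ /no_top]]; first by rewrite eqxx.
  by rewrite /top mcoeff_msupp negbK => /eqP.
have sy := mem_rem xy; set rest := rem y (rem x s).
have perm_s : perm_eq s [:: x, y & rest].
  by apply: perm_trans (perm_to_rem sx) _; rewrite perm_cons perm_to_rem.
have [s'' [Gs'' sig_s'' below_s'' count_s'' sum_s'']] :=
  cancel_top_pair (allP Gs x sx) (allP Gs y sy) (allP sig_s x sx) (allP sig_s y sy)
    (allP below_s x sx) (allP below_s y sy) top_x top_y.
have sub_rest : {subset rest <= s} by move=> q /mem_rem /mem_rem.
exists (s'' ++ rest); split.
- split.
  + by rewrite all_cat Gs''; apply/allP => q /sub_rest /(allP Gs).
  + by rewrite sum_s (perm_big _ perm_s) !big_cons big_cat /= addrA sum_s''.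
  + by rewrite all_cat sig_s''; apply/allP => q /sub_rest /(allP sig_s).
- by rewrite all_cat below_s'' //; apply/allP => q /sub_rest /(allP below_s).
- rewrite (permP perm_s) count_cat /= top_x top_y.
  by rewrite add1n add1n ltnS -(add1n (count _ rest)) leq_add2r.
Qed.

Lemma vanish_or_top s :
  {in s, forall q, qval q = 0} \/ exists t, all (below t) s /\ has (top t) s.
Proof.
set ys := flatten [seq msupp (qval q) | q <- s].
have := lmaxP (leR_refl HR) (leR_trans HR) (leR_total HR) ys.
case: lmax => [t [ys_t t_max]|ys0]; [right; exists t; split | left].
- by apply/allP => q sq; apply/allP => y qy; apply: t_max; apply/flatten_mapP; exists q.
- by case/flatten_mapP: ys_t => q sq qt; apply/hasP; exists q.
move=> q sq; apply: msuppnil0; case E: (msupp (qval q)) => [//|y l].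
suff : y \in ys by rewrite ys0.
by apply/flatten_mapP; exists q; rewrite // E mem_head.
Qed.

Lemma std_vanish s : {in s, forall q, qval q = 0} -> all std_term s.
Proof. by move=> s0; apply/allP => q sq; rewrite /std_term s0 ?lpp0. Qed.

Lemma reduce_below t s : rep s -> all (below t) s -> exists s', rep s' /\ all std_term s'.
Proof.
elim/(well_founded_ind (ltR_wf HR)): t s => t IHt s.
have [N] := ubnP (count (top t) s); elim: N s => // N IHN s lt_count rep_s below_s.
have [le_tf|lt_tf] := boolP (ext_le leR (Some t) (lpp leR f)).
  exists s; split=> //; apply/allP => q sq.
  apply: (ext_le_trans (leR_trans HR) _ le_tf).
  by rewrite (lpp_le HR); exact: (allP below_s q sq).
have [top_s|no_top] := boolP (has (top t) s).
  have [s' [rep_s' below_s' lt_count']] := reduce_top rep_s below_s lt_tf top_s.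
  by apply: IHN rep_s' below_s'; apply: leq_trans lt_count' _; rewrite -ltnS.
have [s0|[t' [below_s' /hasP [q sq top_q]]]] := vanish_or_top s.
  by exists s; split=> //; apply: std_vanish.
apply: IHt rep_s below_s'; apply: ltR_neqAle; first exact: (allP (allP below_s q sq)).
by apply: contraNneq (hasPn no_top q sq) => <-.
Qed.

Lemma reduce_rep s : rep s -> exists s', rep s' /\ all std_term s'.
Proof.
move=> rep_s; have [s0|[t [below_s _]]] := vanish_or_top s; last exact: reduce_below below_s.
by exists s; split=> //; apply: std_vanish.
Qed.

End Reduction.

Theorem lemma5p1 (k : fieldType) (n m : nat)
    (leR : rel 'X_{1..n}) (leM : rel ('X_{1..n} * 'I_m))
    (fs : 'rV[{mpoly k[n]}]_m)
    (G : seq ({mpoly k[n]} * 'rV[{mpoly k[n]}]_m))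
    (f : {mpoly k[n]}) (u : 'rV[{mpoly k[n]}]_m) :
  term_order leR ->
  module_term_order leM ->
  (forall p, p \in G -> in_I fs p) ->
  (forall i : 'I_m, (fs 0 i, @evec k n m i) \in G) ->
  in_I fs (f, u) ->
  (forall gv hw tg th, gv \in G -> hw \in G ->
     critical_pair leR leM tg gv th hw ->
     ext_le leM (lppv leM ('X_[tg] *: gv.2)) (lppv leM u) ->
     std_rep leR leM G (spoly leR tg gv th hw)) ->
  std_rep leR leM G (f, u).
Proof.
(* G is not required to lie in I: only the generators f_i e_i are used. *)
move=> HR HM _ G_fs f_dot spoly_std.
pose s0 := [seq (u 0 i, (fs 0 i, evec k n i)) | i <- enum 'I_m].
have rep_s0 : rep leM G (lppv leM u) f s0.
  split; first by apply/allP => q /mapP [i _ ->]; apply: G_fs.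
    by rewrite [f]f_dot /dotv big_map big_enum.
  by apply/allP => q /mapP [i _ ->]; apply: lppv_coord_le.
have [s [[Gs sum_s sig_s] std_s]] := reduce_rep HR HM spoly_std rep_s0.
by exists s; split.
Qed.
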